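(* Let $K, L$ be compact convex subsets of $\mathbb{R}^n$ and let $\psi: \mathbb{R}^n \rightarrow \mathbb{R}^n$ be a nonsingular linear transformation. Then $L_u$ contains a translate of $K_u$ for every unit vector $u$ if and only if $(\psi L)_u$ contains a translate of $(\psi K)_u$ for every unit vector $u$.
   Context: For a unit vector $u$ and a set $S\subseteq\mathbb{R}^n$, $S_u$ denotes the orthogonal projection of $S$ onto the hyperplane $u^\perp$. *)

From HB Require Import structures.
From mathcomp Require Import all_boot all_order all_algebra.
From mathcomp Require Import all_classical all_reals all_analysis.
Set Implicit Arguments. Unset Strict Implicit. Unset Printing Implicit Defensive.
Import Order.TTheory GRing.Theory Num.Theory.
Import numFieldNormedType.Exports.
Local Open Scope classical_set_scope.
Local Open Scope ring_scope.

Definition dotv (R : realType) (n : nat) (x y : 'rV[R]_n) : R := (x *m y^T) 0 0.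

Definition unit_vec (R : realType) (n : nat) (u : 'rV[R]_n) : Prop := dotv u u = 1.

Definition proj_perp (R : realType) (n : nat) (u x : 'rV[R]_n) : 'rV[R]_n :=
  x - dotv x u *: u.

Definition proj_set (R : realType) (n : nat) (S : set 'rV[R]_n) (u : 'rV[R]_n)
  : set 'rV[R]_n := proj_perp u @` S.

Definition contains_translate (R : realType) (n : nat) (A B : set 'rV[R]_n) : Prop :=
  exists t : 'rV[R]_n, (fun x => x + t) @` B `<=` A.

Definition lin_image (R : realType) (n : nat) (M : 'M[R]_n) (S : set 'rV[R]_n)
  : set 'rV[R]_n := (fun x => x *m M) @` S.

From HB Require Import structures.
From mathcomp Require Import all_boot all_order all_algebra.
From mathcomp Require Import all_classical all_reals all_analysis.
Set Implicit Arguments. Unset Strict Implicit. Unset Printing Implicit Defensive.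
Import Order.TTheory GRing.Theory Num.Theory.
Import numFieldNormedType.Exports.
Local Open Scope classical_set_scope.
Local Open Scope ring_scope.

(* Given a unit vector u, pick a unit vector v with v psi parallel to u.  Then
   projecting onto v^perp, applying psi and projecting onto u^perp is the same
   as applying psi and projecting onto u^perp, because the component along v is
   sent into the line of u.  Hence a translate of K_v inside L_v is carried to a
   translate of (psi K)_u inside (psi L)_u.  Applying this to psi^-1 gives the
   converse. *)

Section ProjectionTranslates.
Variables (R : realType) (n : nat).
Implicit Types (x y u v w : 'rV[R]_n) (M : 'M[R]_n) (K L S : set 'rV[R]_n).

Lemma dotvDl x y u : dotv (x + y) u = dotv x u + dotv y u.
Proof. by rewrite /dotv mulmxDl mxE. Qed.

Lemma dotvZl (c : R) x u : dotv (c *: x) u = c * dotv x u.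
Proof. by rewrite /dotv -scalemxAl mxE. Qed.

Lemma dotvZr (c : R) x u : dotv x (c *: u) = c * dotv x u.
Proof. by rewrite /dotv linearZ /= -scalemxAr mxE. Qed.

Lemma dotvvE x : dotv x x = \sum_j x 0 j ^+ 2.
Proof. by rewrite /dotv mxE; apply: eq_bigr => j _; rewrite mxE expr2. Qed.

Lemma dotvv_ge0 x : 0 <= dotv x x.
Proof. by rewrite dotvvE sumr_ge0 // => j _; rewrite sqr_ge0. Qed.

Lemma dotvv_eq0 x : (dotv x x == 0) = (x == 0).
Proof.
apply/idP/eqP => [|->]; last by rewrite /dotv mul0mx mxE.
rewrite dotvvE psumr_eq0 => [/allP x0|j _]; last exact: sqr_ge0.
by apply/rowP => j; have := x0 j (mem_index_enum j); rewrite sqrf_eq0 mxE => /eqP.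
Qed.

Lemma unit_vec_neq0 u : unit_vec u -> u != 0.
Proof. by rewrite /unit_vec => hu; rewrite -dotvv_eq0 hu oner_neq0. Qed.

Lemma unit_vec_normalize w :
  w != 0 -> unit_vec ((Num.sqrt (dotv w w))^-1 *: w).
Proof.
rewrite -dotvv_eq0 => w0; rewrite /unit_vec dotvZl dotvZr mulrA -expr2.
by rewrite exprVn sqr_sqrtr ?dotvv_ge0 // mulVf.
Qed.

Lemma proj_perpD u x y : proj_perp u (x + y) = proj_perp u x + proj_perp u y.
Proof. by rewrite /proj_perp dotvDl scalerDl opprD addrACA. Qed.

Lemma proj_perpDZ u (c : R) x :
  unit_vec u -> proj_perp u (x + c *: u) = proj_perp u x.
Proof.
move=> hu; rewrite proj_perpD /proj_perp dotvZl hu mulr1 subrr addr0.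
by rewrite /proj_perp.
Qed.

(* Row vectors act on the left of [M], so the preimage direction is [u M^-1]. *)
Lemma unit_vec_mulmx_parallel M u : M \in unitmx -> unit_vec u ->
  exists2 v, unit_vec v & exists c : R, v *m M = c *: u.
Proof.
move=> hM hu; set w := u *m invmx M.
have w0 : w != 0.
  move: (unit_vec_neq0 hu); apply: contra_neq => w0.
  by rewrite -(mulmxKV hM u) -/w w0 mul0mx.
exists ((Num.sqrt (dotv w w))^-1 *: w); first exact: unit_vec_normalize.
by exists (Num.sqrt (dotv w w))^-1; rewrite -scalemxAl mulmxKV.
Qed.

Lemma proj_perp_mulmx_proj_perp M u v (c : R) x : unit_vec u ->
  v *m M = c *: u ->
  proj_perp u (proj_perp v x *m M) = proj_perp u (x *m M).
Proof.
move=> hu vMu; rewrite /(proj_perp v) mulmxBl -scalemxAl vMu scalerA -scaleNr.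
exact: proj_perpDZ.
Qed.

Lemma contains_translate_proj_lin_image M K L u v (c : R) :
  unit_vec u -> v *m M = c *: u ->
  contains_translate (proj_set L v) (proj_set K v) ->
  contains_translate (proj_set (lin_image M L) u) (proj_set (lin_image M K) u).
Proof.
move=> hu vMu [t KtL]; exists (proj_perp u (t *m M)).
move=> _ [_ [_ [k Kk <-] <-] <-].
have [l Ll lE] : proj_set L v (proj_perp v k + t).
  by apply: KtL; exists (proj_perp v k) => //; exists k.
exists (l *m M); first by exists l.
by rewrite -(proj_perp_mulmx_proj_perp _ hu vMu) lE mulmxDl proj_perpD
  (proj_perp_mulmx_proj_perp _ hu vMu).
Qed.

Lemma proj_translates_lin_image M K L : M \in unitmx ->
  (forall v, unit_vec v -> contains_translate (proj_set L v) (proj_set K v)) ->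
  forall u, unit_vec u ->
  contains_translate (proj_set (lin_image M L) u) (proj_set (lin_image M K) u).
Proof.
move=> hM KL u hu; have [v hv [c vMu]] := unit_vec_mulmx_parallel hM hu.
exact: contains_translate_proj_lin_image hu vMu (KL v hv).
Qed.

Lemma lin_image_invmxK M S : M \in unitmx ->
  lin_image (invmx M) (lin_image M S) = S.
Proof.
move=> hM; apply/seteqP; split => [_ [_ [x Sx <-] <-]|x Sx].
  by rewrite mulmxK.
by exists (x *m M); [exists x | rewrite mulmxK].
Qed.

End ProjectionTranslates.

Theorem proposition4p1 (R : realType) (n : nat) (K L : set 'rV[R]_n)
  (psi : 'M[R]_n) :
  compact K -> convex_set K -> compact L -> convex_set L ->
  psi \in unitmx ->
  ((forall u : 'rV[R]_n, unit_vec u ->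
      contains_translate (proj_set L u) (proj_set K u)) <->
   (forall u : 'rV[R]_n, unit_vec u ->
      contains_translate (proj_set (lin_image psi L) u)
                         (proj_set (lin_image psi K) u))).
Proof.
move=> _ _ _ _ hpsi; split; first exact: proj_translates_lin_image.
move=> psiKL u hu.
have hpsiV : invmx psi \in unitmx by rewrite unitmx_inv.
rewrite -(lin_image_invmxK L hpsi) -(lin_image_invmxK K hpsi).
exact: proj_translates_lin_image hpsiV psiKL u hu.
Qed.
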